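(* Let $\mathcal{G}$ be the real Lie algebra with basis $X_1,X_2,X_3$ and brackets $[X_1,X_2]=-X_2-X_3$, $[X_2,X_3]=0$, $[X_3,X_1]=X_2+X_3$ (Bianchi type $III$). Every real Manin triple $(\mathcal{D},\mathcal{G}',\tilde{\mathcal{G}}')$ with $\mathcal{G}'\cong\mathcal{G}$ is isomorphic to exactly one Manin triple $(\mathcal{D},\mathcal{G},\tilde{\mathcal{G}})$ in which $\tilde{\mathcal{G}}$, in the basis $\tilde X^1,\tilde X^2,\tilde X^3$ dual to $X_1,X_2,X_3$, has one of the following bracket structures: (a) (Bianchi $I$) all brackets zero; (b) (Bianchi $II$) $[\tilde X^1,\tilde X^2]=0$, $[\tilde X^2,\tilde X^3]=\tilde X^1$, $[\tilde X^3,\tilde X^1]=0$; (c) (Bianchi $III$) (i) $[\tilde X^1,\tilde X^2]=-b(\tilde X^2+\tilde X^3)$, $[\tilde X^2,\tilde X^3]=0$, $[\tilde X^3,\tilde X^1]=b(\tilde X^2+\tilde X^3)$, $b\in\mathbb{R}\setminus\{0\}$; (ii) $[\tilde X^1,\tilde X^2]=0$, $[\tilde X^2,\tilde X^3]=\tilde X^2+\tilde X^3$, $[\tilde X^3,\tilde X^1]=0$; (iii) $[\tilde X^1,\tilde X^2]=\tilde X^1$, $[\tilde X^2,\tilde X^3]=0$, $[\tilde X^3,\tilde X^1]=-\tilde X^1$.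
   Context: A real Manin triple $(\mathcal{D},\mathcal{G},\tilde{\mathcal{G}})$ consists of a real Lie algebra $\mathcal{D}$ with a symmetric, ad-invariant, nondegenerate bilinear form $\langle\cdot,\cdot\rangle$, and two maximally isotropic Lie subalgebras $\mathcal{G},\tilde{\mathcal{G}}$ with $\mathcal{D}=\mathcal{G}\oplus\tilde{\mathcal{G}}$ as vector spaces; here $\dim\mathcal{D}=6$, $\dim\mathcal{G}=\dim\tilde{\mathcal{G}}=3$. Bases $X_i$ of $\mathcal{G}$ and $\tilde X^i$ of $\tilde{\mathcal{G}}$ are dual if $\langle X_i,X_j\rangle=0$, $\langle X_i,\tilde X^j\rangle=\delta_i^j$, $\langle\tilde X^i,\tilde X^j\rangle=0$. If $[X_i,X_j]=f_{ij}{}^kX_k$ and $[\tilde X^i,\tilde X^j]=\tilde f^{ij}{}_k\tilde X^k$, ad-invariance forces $[X_i,\tilde X^j]=f_{ki}{}^j\tilde X^k+\tilde f^{jk}{}_iX_k$, so the triple is determined by the brackets of $\mathcal{G}$ and $\tilde{\mathcal{G}}$ in dual bases. Two Manin triples are isomorphic if there is a Lie algebra isomorphism of the doubles preserving the bilinear forms and mapping first subalgebra to first subalgebra and second to second; equivalently, they are related by a change of basis $X_i'=X_kA^k{}_i$, $\tilde X'^j=(A^{-1})^j{}_k\tilde X^k$. Different values of the parameter $b$ give non-isomorphic triples. *)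

From HB Require Import structures.
From mathcomp Require Import all_boot all_order all_algebra.
From mathcomp Require Import reals.
Set Implicit Arguments. Unset Strict Implicit. Unset Printing Implicit Defensive.
Import Order.TTheory GRing.Theory Num.Theory.
Local Open Scope ring_scope.

Section Defs.
Variable R : realType.

(* sc i j k = f_{ij}^k : [X_i, X_j] = sum_k f_{ij}^k X_k  (indices 0,1,2 = 1,2,3) *)
Definition sc := 'I_3 -> 'I_3 -> 'I_3 -> R.

(* basis of the double D = G (+) G~ : inl i = X_i, inr i = X~^i *)
Definition B := ('I_3 + 'I_3)%type.

(* Bracket structure constants of D determined by f (on G) and ft (on G~),
   ft i j k = ft^{ij}_k, with
   [X_i, X~^j] = f_{ki}^j X~^k + ft^{jk}_i X_k. *)
Definition double_sc (f ft : sc) (a b c : B) : R :=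
  match a, b, c with
  | inl i, inl j, inl k => f i j k
  | inl _, inl _, inr _ => 0
  | inr i, inr j, inr k => ft i j k
  | inr _, inr _, inl _ => 0
  | inl i, inr j, inl k => ft j k i
  | inl i, inr j, inr k => f k i j
  | inr j, inl i, inl k => - ft j k i
  | inr j, inl i, inr k => - f k i j
  end.

Definition form (a b : B) : R :=
  match a, b with
  | inl i, inr j => (i == j)%:R
  | inr i, inl j => (i == j)%:R
  | _, _ => 0
  end.

Definition is_lie {T : finType} (F : T -> T -> T -> R) : Prop :=
  (forall a c, F a a c = 0) /\
  (forall a b c m,
     \sum_(l : T) (F a b l * F l c m + F b c l * F l a m + F c a l * F l b m) = 0).

Definition ad_invariant {T : finType} (F : T -> T -> T -> R) (g : T -> T -> R) : Prop :=
  forall a b c, \sum_(l : T) (F a b l * g l c + F a c l * g b l) = 0.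

(* (D, G, G~) with dual bases X_i, X~^i and brackets f, ft is a Manin triple.
   (Nondegeneracy of the form, maximal isotropy of G, G~ and D = G (+) G~ hold
   by construction; G, G~ are subalgebras by construction of the bracket.) *)
Definition manin_triple (f ft : sc) : Prop :=
  is_lie (double_sc f ft) /\ ad_invariant (double_sc f ft) form.

(* change of basis X'_i = X_k A^k_i : new structure constants *)
Definition transf (A : 'M[R]_3) (f : sc) : sc := fun i j n =>
  \sum_(k < 3) \sum_(l < 3) \sum_(m < 3) A k i * A l j * f k l m * invmx A n m.

(* dual change of basis X~'^j = (A^-1)^j_k X~^k *)
Definition transft (A : 'M[R]_3) (ft : sc) : sc := fun i j n =>
  \sum_(k < 3) \sum_(l < 3) \sum_(m < 3)
     invmx A i k * invmx A j l * ft k l m * A m n.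

Definition lie_isomorphic (f1 f2 : sc) : Prop :=
  exists A : 'M[R]_3, A \in unitmx /\ forall i j n, f2 i j n = transf A f1 i j n.

Definition manin_isomorphic (f1 ft1 f2 ft2 : sc) : Prop :=
  exists A : 'M[R]_3, A \in unitmx /\
    (forall i j n, f2 i j n = transf A f1 i j n) /\
    (forall i j n, ft2 i j n = transft A ft1 i j n).

Definition vec3 (a b c : R) (k : 'I_3) : R :=
  match nat_of_ord k with O => a | S O => b | _ => c end.

Definition sc_of (c12 c23 c31 : 'I_3 -> R) : sc := fun i j k =>
  match nat_of_ord i, nat_of_ord j with
  | O, S O => c12 k
  | S O, O => - c12 k
  | S O, S (S O) => c23 k
  | S (S O), S O => - c23 k
  | S (S O), O => c31 k
  | O, S (S O) => - c31 k
  | _, _ => 0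
  end.

Definition zero3 : 'I_3 -> R := vec3 0 0 0.

Definition bianchiIII : sc :=
  sc_of (vec3 0 (-1) (-1)) zero3 (vec3 0 1 1).

Inductive dual_case :=
  | CaseI
  | CaseII
  | CaseIIIi of R
  | CaseIIIii
  | CaseIIIiii.

Definition dual_case_ok (t : dual_case) : Prop :=
  match t with CaseIIIi b => b <> 0 | _ => True end.

Definition dual_sc (t : dual_case) : sc :=
  match t with
  | CaseI => sc_of zero3 zero3 zero3
  | CaseII => sc_of zero3 (vec3 1 0 0) zero3
  | CaseIIIi b => sc_of (vec3 0 (- b) (- b)) zero3 (vec3 0 b b)
  | CaseIIIii => sc_of zero3 (vec3 0 1 1) zero3
  | CaseIIIiii => sc_of (vec3 1 0 0) zero3 (vec3 (-1) 0 0)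
  end.

End Defs.

(* In the bases X_i and X~^i, ad-invariance of the form says exactly that
   both structure tensors are skew, and a change of basis A of G acts on the
   double by the block-diagonal matrix diag(A, A^-T), which preserves the Jacobi
   identity.  Once G is normalised to Bianchi III, the mixed Jacobi identities
   force the dual brackets into a four-parameter family (al, a, be, c) with
   c al = a be.  An automorphism of Bianchi III, with parameters x, y, p, q,
   fixes a and maps
     al |-> (p+q) al - (x+y) a,   c |-> c' := (x-y) a + (p-q) c,
     be |-> (p+q) ((x-y) al + (p-q) be) - (x+y) c'.
   A case split on which of a, al, c, be vanish yields a normal form
   (existence).  The same formulas show that a, and the vanishing of al, c and
   be, are invariants, and these tell the five normal forms apart
   (uniqueness). *)

From Pilot Require Import Defs.
From mathcomp Require Import all_boot all_order all_algebra.
From mathcomp Require Import reals.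
From mathcomp Require boolp.
From mathcomp Require Import ring lra.
Set Implicit Arguments. Unset Strict Implicit. Unset Printing Implicit Defensive.
Import GRing.Theory Num.Theory.
Local Open Scope ring_scope.

Section SumLemmas.
Variable R : pzSemiRingType.

Lemma sum_mul_delta (I : finType) (F : I -> R) a : \sum_b F b * (b == a)%:R = F a.
Proof.
rewrite (bigD1 a) //= eqxx mulr1 big1 ?addr0 // => b /negbTE ->.
by rewrite mulr0.
Qed.

Lemma sum_delta_mul (I : finType) (F : I -> R) a : \sum_b (b == a)%:R * F b = F a.
Proof.
rewrite (bigD1 a) //= eqxx mul1r big1 ?addr0 // => b /negbTE ->.
by rewrite mul0r.
Qed.

Lemma sum3_mulr (I : finType) (X : I -> I -> I -> R) (c : I -> R) :
  \sum_k \sum_l \sum_m X k l m * c m = \sum_m (\sum_k \sum_l X k l m) * c m.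
Proof.
under eq_bigr do rewrite exchange_big; rewrite exchange_big /=.
by apply: eq_bigr => m _; rewrite mulr_suml; apply: eq_bigr => k _; rewrite mulr_suml.
Qed.

Lemma sum3_rot (I : finType) (G : I -> I -> I -> R) :
  \sum_x \sum_y \sum_v G x y v = \sum_v \sum_x \sum_y G x y v.
Proof. by under eq_bigr do rewrite exchange_big; rewrite exchange_big. Qed.

Lemma sum_mul2 (I : finType) (X Y : I -> R) (z : R) :
  (\sum_a X a) * (\sum_b Y b) * z = \sum_a \sum_b X a * Y b * z.
Proof. by rewrite big_distrlr mulr_suml; apply: eq_bigr => a _; rewrite mulr_suml. Qed.

Lemma sum2_mul_sum2 (I : finType) (X Y : I -> I -> R) :
  (\sum_x \sum_y X x y) * (\sum_v \sum_w Y v w) =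
  \sum_x \sum_y \sum_v \sum_w X x y * Y v w.
Proof.
rewrite mulr_suml; apply: eq_bigr => x _; rewrite mulr_suml; apply: eq_bigr => y _.
by rewrite mulr_sumr; apply: eq_bigr => v _; rewrite mulr_sumr.
Qed.

End SumLemmas.

Section BasisChange.
Variables (R : comUnitRingType) (n : nat).
Implicit Types (S T : 'M[R]_n) (f g h : 'I_n -> 'I_n -> 'I_n -> R).

(* [basis_change S f g]: g is the structure tensor f written in the new basis
   X'_i = sum_k S k i X_k; this form avoids inverting S. *)
Definition basis_change S f g : Prop := forall i j m,
  \sum_k \sum_l S k i * S l j * f k l m = \sum_r g i j r * S m r.

Lemma coord_change (M N : 'M[R]_n) (u w : 'I_n -> R) : N *m M = 1%:M ->
  (forall m, u m = \sum_r w r * M m r) -> forall r, w r = \sum_m u m * N r m.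
Proof.
move=> NM uE r; under eq_bigr do rewrite uE mulr_suml.
rewrite exchange_big /= -[LHS]sum_mul_delta; apply: eq_bigr => s _.
have := congr1 (fun A : 'M_n => A r s) NM; rewrite !mxE eq_sym => <-.
by rewrite mulr_sumr; apply: eq_bigr => m _; rewrite mulrCA mulrC.
Qed.

Lemma basis_changeP S f g : S \in unitmx ->
  basis_change S f g <->
  forall i j r, g i j r = \sum_k \sum_l \sum_m S k i * S l j * f k l m * invmx S r m.
Proof.
move=> Su; split=> chS i j.
  by move=> r; rewrite sum3_mulr; apply: coord_change (chS i j) r; rewrite mulVmx.
by apply: coord_change (mulmxV Su) _ => r; rewrite chS sum3_mulr.
Qed.

Lemma basis_change_uniq S f g h : S \in unitmx ->
  basis_change S f g -> basis_change S f h -> forall i j r, g i j r = h i j r.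
Proof.
by move=> Su /(basis_changeP _ _ Su) chg /(basis_changeP _ _ Su) chh i j r; rewrite chg chh.
Qed.

Lemma basis_change_mul S T f g h :
  basis_change S f g -> basis_change T g h -> basis_change (S *m T) f h.
Proof.
move=> chS chT i j m.
transitivity (\sum_a \sum_b T a i * T b j * \sum_k \sum_l S k a * S l b * f k l m).
  under eq_bigr do under eq_bigr do rewrite !mxE sum_mul2.
  under eq_bigr do rewrite exchange_big /=.
  rewrite exchange_big /=; apply: eq_bigr => a _.
  under eq_bigr do rewrite exchange_big /=.
  rewrite exchange_big; apply: eq_bigr => b _.
  rewrite mulr_sumr; apply: eq_bigr => k _.
  by rewrite mulr_sumr; apply: eq_bigr => l _; ring.
under eq_bigr do under eq_bigr do rewrite chS mulr_sumr.
under eq_bigr do rewrite exchange_big /=.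
rewrite exchange_big /=.
under eq_bigr do under eq_bigr do under eq_bigr do rewrite mulrA.
under eq_bigr do under eq_bigr do rewrite -mulr_suml.
under eq_bigr do rewrite -mulr_suml chT mulr_suml.
rewrite exchange_big; apply: eq_bigr => r _.
by rewrite mxE mulr_sumr; apply: eq_bigr => s _; ring.
Qed.

Lemma basis_change1 f g : basis_change 1%:M f g -> forall i j m, g i j m = f i j m.
Proof.
move=> ch1 i j m; have := ch1 i j m.
under eq_bigr do under eq_bigr do rewrite !mxE -mulrA.
under eq_bigr do rewrite -mulr_sumr sum_delta_mul.
by under [RHS]eq_bigr do rewrite mxE eq_sym; rewrite sum_delta_mul sum_mul_delta.
Qed.

Lemma basis_change_inv S f g : S \in unitmx ->
  basis_change S f g -> basis_change (invmx S) g f.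
Proof.
move=> Su chS.
pose h i j r := \sum_k \sum_l \sum_m
  invmx S k i * invmx S l j * g k l m * invmx (invmx S) r m.
have chh : basis_change (invmx S) g h by apply/basis_changeP; rewrite ?unitmx_inv.
have hf : forall i j m, h i j m = f i j m.
  by apply: basis_change1; rewrite -(mulmxV Su); apply: basis_change_mul chS chh.
by move=> i j m; rewrite chh; apply: eq_bigr => r _; rewrite hf.
Qed.

End BasisChange.

Definition skew_sc (R : zmodType) (T : Type) (F : T -> T -> T -> R) : Prop :=
  forall a b c, F a b c = - F b a c.

Section Transport.
Variables (R : comPzRingType) (T : finType) (P Q : T -> T -> R).
Implicit Type F : T -> T -> T -> R.

Definition sc_transport F i j n : R :=
  \sum_a \sum_b \sum_c P a i * P b j * F a b c * Q n c.

Lemma skew_transport F : skew_sc F -> skew_sc (sc_transport F).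
Proof.
move=> skF i j n; rewrite /sc_transport exchange_big -sumrN; apply: eq_bigr => b _.
rewrite -sumrN; apply: eq_bigr => a _; rewrite -sumrN; apply: eq_bigr => c _.
by rewrite skF; ring.
Qed.

Hypothesis PQ : forall a b, \sum_m P a m * Q m b = (a == b)%:R.

Lemma transport_contract (X Y : T -> R) :
  \sum_l (\sum_z X z * Q l z) * (\sum_u P u l * Y u) = \sum_z X z * Y z.
Proof.
under eq_bigr do rewrite big_distrlr /=.
rewrite exchange_big /=; apply: eq_bigr => z _.
rewrite exchange_big /=.
transitivity (\sum_u X z * Y u * \sum_l P u l * Q l z).
  by apply: eq_bigr => u _; rewrite mulr_sumr; apply: eq_bigr => l _; ring.
by under eq_bigr do rewrite PQ; rewrite sum_mul_delta.
Qed.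

Lemma transport_bracket F a b c m :
  \sum_l sc_transport F a b l * sc_transport F l c m =
  \sum_x \sum_y \sum_v \sum_w
    P x a * P y b * P v c * Q m w * \sum_z F x y z * F z v w.
Proof.
have trE1 l : sc_transport F a b l =
    \sum_z (\sum_x \sum_y P x a * P y b * F x y z) * Q l z by exact: sum3_mulr.
have trE2 l : sc_transport F l c m =
    \sum_u P u l * \sum_v \sum_w P v c * F u v w * Q m w.
  apply: eq_bigr => u _; rewrite mulr_sumr; apply: eq_bigr => v _.
  by rewrite mulr_sumr; apply: eq_bigr => w _; ring.
under eq_bigr do rewrite trE1 trE2.
rewrite transport_contract.
under eq_bigr do rewrite sum2_mul_sum2.
rewrite exchange_big; apply: eq_bigr => x _; rewrite exchange_big; apply: eq_bigr => y _.
rewrite exchange_big; apply: eq_bigr => v _; rewrite exchange_big; apply: eq_bigr => w _.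
by rewrite mulr_sumr; apply: eq_bigr => z _; ring.
Qed.

End Transport.

Lemma is_lie_transport (R : realType) (T : finType) (P Q : T -> T -> R) F :
  (forall a b, \sum_m P a m * Q m b = (a == b)%:R) ->
  skew_sc F -> is_lie F -> is_lie (sc_transport P Q F).
Proof.
move=> PQ skF [_ jacF]; split=> [a c | a b c m].
  by have := skew_transport P Q skF a a c; lra.
rewrite !big_split /= !(transport_bracket PQ).
(* After a cyclic reindexing of the second and third terms, the Jacobi sum of
   the transported tensor is a contraction of the Jacobi sums of F. *)
rewrite [X in _ + X + _]sum3_rot [X in _ + _ + X]sum3_rot [X in _ + _ + X]sum3_rot.
rewrite -!big_split; apply: big1 => x _; rewrite -!big_split; apply: big1 => y _.
rewrite -!big_split; apply: big1 => v _; rewrite -!big_split; apply: big1 => w _ /=.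
have := jacF x y v w; rewrite !big_split /=.
set s1 := (\sum_l F x y l * F l v w); set s2 := (\sum_l F y v l * F l x w).
set s3 := (\sum_l F v x l * F l y w) => jac.
by rewrite (_ : s1 = - s2 - s3); [ring | lra].
Qed.

Section BlockDiag.
Variables (R : pzSemiRingType) (n : nat).
Implicit Types M N : 'M[R]_n.

Definition blockdiag M N (a b : 'I_n + 'I_n) : R :=
  match a, b with
  | inl i, inl j => M i j
  | inr i, inr j => N i j
  | _, _ => 0
  end.

Definition same_side (x : 'I_n + 'I_n) (k : 'I_n) : 'I_n + 'I_n :=
  if x is inl _ then inl k else inr k.

Lemma sum_blockdiagl M N (G : 'I_n + 'I_n -> R) x :
  \sum_a blockdiag M N a x * G a =
  \sum_k blockdiag M N (same_side x k) x * G (same_side x k).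
Proof.
rewrite big_sumType; case: x => i /=.
  by rewrite [X in _ + X]big1 ?addr0 // => k _; rewrite mul0r.
by rewrite [X in X + _]big1 ?add0r // => k _; rewrite mul0r.
Qed.

Lemma sum_blockdiagr M N (G : 'I_n + 'I_n -> R) z :
  \sum_c G c * blockdiag M N z c =
  \sum_k G (same_side z k) * blockdiag M N z (same_side z k).
Proof.
rewrite big_sumType; case: z => i /=.
  by rewrite [X in _ + X]big1 ?addr0 // => k _; rewrite mulr0.
by rewrite [X in X + _]big1 ?add0r // => k _; rewrite mulr0.
Qed.

Lemma blockdiag_mul M N M' N' a b :
  \sum_c blockdiag M N a c * blockdiag M' N' c b = blockdiag (M *m M') (N *m N') a b.
Proof.
rewrite big_sumType; case: a => i; case: b => j /=; rewrite ?mxE.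
all: under [X in X + _]eq_bigr do rewrite ?mul0r ?mulr0.
all: by under [X in _ + X]eq_bigr do rewrite ?mul0r ?mulr0; rewrite !big1_eq ?addr0 ?add0r.
Qed.

End BlockDiag.

Lemma transport_blockdiag (R : comPzRingType) n (M N M' N' : 'M[R]_n)
    (F : 'I_n + 'I_n -> 'I_n + 'I_n -> 'I_n + 'I_n -> R) x y z :
  sc_transport (blockdiag M N) (blockdiag M' N') F x y z =
  \sum_a \sum_b \sum_c blockdiag M N (same_side x a) x * blockdiag M N (same_side y b) y *
    F (same_side x a) (same_side y b) (same_side z c) * blockdiag M' N' z (same_side z c).
Proof.
transitivity (\sum_a blockdiag M N a x * \sum_b blockdiag M N b y *
                \sum_c F a b c * blockdiag M' N' z c).
  apply: eq_bigr => a _; rewrite mulr_sumr; apply: eq_bigr => b _.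
  by rewrite !mulr_sumr; apply: eq_bigr => c _; ring.
rewrite sum_blockdiagl; apply: eq_bigr => a _.
rewrite sum_blockdiagl mulr_sumr; apply: eq_bigr => b _.
by rewrite sum_blockdiagr !mulr_sumr; apply: eq_bigr => c _; ring.
Qed.

Section Double.
Variable R : realType.

Ltac sum3_congr := rewrite -?sumrN; apply: eq_bigr => ? _; rewrite -?sumrN;
  apply: eq_bigr => ? _; rewrite -?sumrN; apply: eq_bigr => ? _; rewrite ?mxE; ring.

Lemma double_sc_transf (A : 'M[R]_3) (f ft : sc R) x y z :
  double_sc (transf A f) (transft A ft) x y z =
  sc_transport (blockdiag A (invmx A)^T) (blockdiag (invmx A) A^T) (double_sc f ft) x y z.
Proof.
rewrite transport_blockdiag; case: x => i; case: y => j; case: z => k /=.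
- by sum3_congr.
- by rewrite big1 // => a _; rewrite big1 // => b _; rewrite big1 // => c _; ring.
- by rewrite /transft sum3_rot; sum3_congr.
- by rewrite /transf sum3_rot sum3_rot; sum3_congr.
- by rewrite /transft; under eq_bigr do rewrite exchange_big; sum3_congr.
- by rewrite /transf sum3_rot; under eq_bigr do rewrite exchange_big; sum3_congr.
- by rewrite big1 // => a _; rewrite big1 // => b _; rewrite big1 // => c _; ring.
- by sum3_congr.
Qed.

End Double.

Section ManinTriples.
Variable R : realType.
Implicit Types (f ft : sc R) (A : 'M[R]_3).

Lemma skew_double f ft : skew_sc (double_sc f ft) <-> skew_sc f /\ skew_sc ft.
Proof.
split=> [skD | [skf skft]].
  split=> i j k; first exact: (skD (inl i) (inl j) (inl k)).
  exact: (skD (inr i) (inr j) (inr k)).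
by case=> i; case=> j; case=> k /=; rewrite ?oppr0 ?opprK.
Qed.

Definition partner (x : B) : B := match x with inl i => inr i | inr i => inl i end.

Lemma sum_mul_form (G : B -> R) c : \sum_l G l * Defs.form R l c = G (partner c).
Proof.
rewrite big_sumType; case: c => k /=.
  by rewrite big1 ?add0r ?sum_mul_delta // => l _; rewrite mulr0.
by rewrite [X in _ + X]big1 ?addr0 ?sum_mul_delta // => l _; rewrite mulr0.
Qed.

Lemma form_sym b c : Defs.form R b c = Defs.form R c b.
Proof. by case: b => i; case: c => j //=; rewrite eq_sym. Qed.

Lemma ad_invariant_double f ft :
  ad_invariant (double_sc f ft) (Defs.form R) <-> skew_sc f /\ skew_sc ft.
Proof.
rewrite /ad_invariant.
have adE a b c : \sum_l (double_sc f ft a b l * Defs.form R l c +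
                         double_sc f ft a c l * Defs.form R b l) =
                 double_sc f ft a b (partner c) + double_sc f ft a c (partner b).
  rewrite big_split /= sum_mul_form.
  by under eq_bigr do rewrite form_sym; rewrite sum_mul_form.
split=> [adD | [skf skft] a b c]; last first.
  by rewrite adE; case: a => i; case: b => j; case: c => k /=; rewrite 1?skf 1?skft; ring.
split=> [i j k | i j k].
  by have := adD (inl i) (inl j) (inr k); rewrite adE /=; lra.
by have := adD (inl k) (inr i) (inr j); rewrite adE /=; lra.
Qed.

Lemma manin_tripleE f ft :
  manin_triple f ft <-> is_lie (double_sc f ft) /\ skew_sc f /\ skew_sc ft.
Proof. by rewrite /manin_triple ad_invariant_double. Qed.

Lemma blockdiag_inv A : A \in unitmx -> forall a b,
  \sum_m blockdiag A (invmx A)^T a m * blockdiag (invmx A) A^T m b = (a == b)%:R.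
Proof.
move=> Au a b; rewrite blockdiag_mul -trmx_mul mulmxV // trmx1.
by case: a => i; case: b => j; rewrite /= ?mxE.
Qed.

Lemma manin_triple_transf A f ft : A \in unitmx ->
  manin_triple f ft -> manin_triple (transf A f) (transft A ft).
Proof.
move=> Au /manin_tripleE[lieD [skf skft]].
have skD : skew_sc (double_sc f ft) by apply/skew_double.
have DE : double_sc (transf A f) (transft A ft) =
    sc_transport (blockdiag A (invmx A)^T) (blockdiag (invmx A) A^T) (double_sc f ft).
  by do 3 apply: boolp.funext => ?; apply: double_sc_transf.
apply/manin_tripleE; split.
  by rewrite DE; apply: is_lie_transport (blockdiag_inv Au) _ _.
by apply/skew_double; rewrite DE; apply: skew_transport.
Qed.

Lemma transf_basis_change A f g : A \in unitmx ->
  basis_change A f g <-> forall i j n, g i j n = transf A f i j n.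
Proof. exact: basis_changeP. Qed.

Lemma transft_basis_change A ft ft' : A \in unitmx ->
  basis_change A^T ft' ft <-> forall i j n, ft' i j n = transft A ft i j n.
Proof.
move=> Au; have Au' : (invmx A)^T \in unitmx by rewrite unitmx_tr unitmx_inv.
have AT : invmx (invmx A)^T = A^T by rewrite trmx_inv invmxK.
have transftE i j n : transft A ft i j n = \sum_k \sum_l \sum_m
    (invmx A)^T k i * (invmx A)^T l j * ft k l m * invmx (invmx A)^T n m.
  by rewrite AT; do 3 apply: eq_bigr => ? _; rewrite !mxE.
split=> [chT i j n | E].
  have := basis_change_inv (etrans (unitmx_tr A) Au) chT; rewrite -trmx_inv.
  by move/(basis_changeP _ _ Au') => ->; rewrite transftE.
rewrite -AT; apply: basis_change_inv => //; apply/(basis_changeP _ _ Au') => i j n.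
by rewrite E transftE.
Qed.

End ManinTriples.

Section BianchiIII.
Variable R : realType.

Definition i0 : 'I_3 := @Ordinal 3 0 isT.
Definition i1 : 'I_3 := @Ordinal 3 1 isT.
Definition i2 : 'I_3 := @Ordinal 3 2 isT.

Lemma ord3P (i : 'I_3) : [\/ i = i0, i = i1 | i = i2].
Proof.
case: i => [[|[|[|k]]] lt_i3] //;
  [apply: Or31 | apply: Or32 | apply: Or33]; exact: val_inj.
Qed.

Lemma sum3 (G : 'I_3 -> R) : \sum_(i < 3) G i = G i0 + G i1 + G i2.
Proof.
rewrite !big_ord_recl big_ord0 addr0 addrA.
by congr (G _ + G _ + G _); apply: val_inj.
Qed.

Lemma vec3_eta (v : 'I_3 -> R) : v = vec3 (v i0) (v i1) (v i2).
Proof. by apply: boolp.funext => k; case: (ord3P k) => ->. Qed.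

Lemma sc_of_skew (f : sc R) : skew_sc f -> f = sc_of (f i0 i1) (f i1 i2) (f i2 i0).
Proof.
move=> skf; apply: boolp.funext => a; apply: boolp.funext => b; apply: boolp.funext => k.
have f0 x : f x x k = 0 by have := skf x x k; lra.
by case: (ord3P a) => ->; case: (ord3P b) => -> /=; rewrite ?f0 // skf.
Qed.

Definition bianchiIII_dual (al a be c : R) : sc R :=
  sc_of (vec3 al a a) (vec3 be c c) (vec3 (- al) (- a) (- a)).

Lemma manin_bianchiIII_dual ft : manin_triple (bianchiIII R) ft ->
  exists al a be c, ft = bianchiIII_dual al a be c /\ c * al = a * be.
Proof.
move=> /manin_tripleE[[_ jac] [_ skft]].
move: jac; rewrite (sc_of_skew skft).
rewrite (vec3_eta (ft i0 i1)) (vec3_eta (ft i1 i2)) (vec3_eta (ft i2 i0)).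
move: (ft i0 i1 i0) (ft i0 i1 i1) (ft i0 i1 i2) (ft i1 i2 i0) (ft i1 i2 i1) (ft i1 i2 i2)
  (ft i2 i0 i0) (ft i2 i0 i1) (ft i2 i0 i2) => u0 u1 u2 v0 v1 v2 w0 w1 w2 jac.
have e1 := jac (inl i0) (inl i1) (inr i0) (inl i1).
have e2 := jac (inl i0) (inl i1) (inr i0) (inl i2).
have e3 := jac (inl i0) (inl i1) (inr i1) (inl i2).
have e4 := jac (inl i0) (inl i2) (inr i1) (inl i2).
have e5 := jac (inl i1) (inl i2) (inr i1) (inl i2).
have e6 := jac (inl i0) (inr i0) (inr i1) (inl i2).
(* e1 .. e5 are linear in the dual constants; e6 gives c al = a be. *)
rewrite !big_sumType !sum3 /= /bianchiIII /sc_of /Defs.zero3 /vec3 /= in e1 e2 e3 e4 e5 e6.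
have [u2E v2E w0E w1E w2E] : [/\ u2 = u1, v2 = v1, w0 = - u0, w1 = - u1 & w2 = - u1].
  by split; lra.
rewrite u2E v2E w0E w1E w2E in e6 *.
by exists u0, u1, v0, v1; split=> //; lra.
Qed.

Definition bianchiIII_aut (x y p q : R) : 'M[R]_3 := \matrix_(i, j)
  match nat_of_ord i, nat_of_ord j with
  | 0, 0 => 1 | 0, _ => 0
  | 1, 0 => x | 1, 1 => p | 1, _ => q
  | _, 0 => y | _, 1 => q | _, _ => p
  end.

Lemma basis_change_bianchiIII_aut x y p q :
  basis_change (bianchiIII_aut x y p q) (bianchiIII R) (bianchiIII R).
Proof.
move=> i j m; rewrite !sum3.
by case: (ord3P i) => ->; case: (ord3P j) => ->; case: (ord3P m) => ->;
  rewrite !mxE /= /bianchiIII /sc_of /Defs.zero3 /vec3 /=; ring.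
Qed.

Lemma bianchiIII_aut_unit x y p q :
  p + q != 0 -> p - q != 0 -> bianchiIII_aut x y p q \in unitmx.
Proof.
move=> pq_neq0 qp_neq0; have D_neq0 : p * p - q * q != 0.
  by rewrite (_ : p * p - q * q = (p + q) * (p - q)) ?mulf_neq0 //; ring.
pose p' := p / (p * p - q * q); pose q' := - q / (p * p - q * q).
suff /mulmx1_unit[] : bianchiIII_aut x y p q *m
    bianchiIII_aut (- (p' * x + q' * y)) (- (q' * x + p' * y)) p' q' = 1%:M by [].
apply/matrixP => i j; rewrite mxE sum3.
by case: (ord3P i) => ->; case: (ord3P j) => ->; rewrite !mxE /= /p' /q'; field.
Qed.

Lemma unitmx_cols_indep (S : 'M[R]_3) r :
  S \in unitmx -> ~ (forall k, S k i1 = r * S k i2).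
Proof.
move=> Su col12.
have e11 := congr1 (fun M : 'M[R]_3 => M i1 i1) (mulVmx Su).
have e12 := congr1 (fun M : 'M[R]_3 => M i1 i2) (mulVmx Su).
rewrite /= !mxE eqxx in e11 e12; move: e11.
under eq_bigr do rewrite col12 mulrCA.
by rewrite -mulr_sumr e12 mulr0 => /eqP; rewrite eq_sym oner_eq0.
Qed.

Lemma bianchiIII_autP S :
  S \in unitmx -> basis_change S (bianchiIII R) (bianchiIII R) ->
  exists x y p q, [/\ S = bianchiIII_aut x y p q, p + q != 0 & p - q != 0].
Proof.
move=> Su chS.
have e1 := chS i0 i1 i0; have e2 := chS i0 i1 i1; have e3 := chS i0 i1 i2.
have e4 := chS i0 i2 i1; have e5 := chS i1 i2 i1.
rewrite !sum3 /= /bianchiIII /sc_of /Defs.zero3 /vec3 /= in e1 e2 e3 e4 e5.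
have col_cases (P : 'I_3 -> Prop) : P i0 -> P i1 -> P i2 -> forall k, P k.
  by move=> P0 P1 P2 k; case: (ord3P k) => ->.
have s02E : S i0 i2 = - S i0 i1 by lra.
have s2E : S i2 i1 + S i2 i2 = S i1 i1 + S i1 i2 by lra.
have pq_neq0 : S i1 i1 + S i1 i2 != 0.
  by apply/eqP => s0; apply: (@unitmx_cols_indep S (-1) Su); apply: col_cases; lra.
have s01E : S i0 i1 = 0 by apply: (mulIf pq_neq0); rewrite mul0r; nra.
rewrite s01E oppr0 in s02E e2 e3 e4; rewrite s02E in e4.
have s00E : S i0 i0 = 1 by apply: (mulIf pq_neq0); rewrite mul1r; nra.
rewrite s00E in e2 e4.
have s21E : S i2 i1 = S i1 i2 by lra.
have s22E : S i2 i2 = S i1 i1 by lra.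
exists (S i1 i0), (S i2 i0), (S i1 i1), (S i1 i2); split=> //.
  apply/matrixP => i j; rewrite mxE.
  by case: (ord3P i) => ->; case: (ord3P j) => ->.
by apply/eqP => s0; apply: (@unitmx_cols_indep S 1 Su); apply: col_cases; lra.
Qed.

Lemma basis_change_bianchiIII_dual x y p q al a be c al' be' c' :
  al' = (p + q) * al - (x + y) * a ->
  c' = (x - y) * a + (p - q) * c ->
  be' = (p + q) * ((x - y) * al + (p - q) * be) - (x + y) * c' ->
  basis_change (bianchiIII_aut x y p q)^T (bianchiIII_dual al a be c)
    (bianchiIII_dual al' a be' c').
Proof.
move=> -> -> -> i j m; rewrite !sum3.
by case: (ord3P i) => ->; case: (ord3P j) => ->; case: (ord3P m) => ->;
  rewrite !mxE /= /bianchiIII_dual /sc_of /vec3 /=; ring.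
Qed.

Lemma dual_scE (t : dual_case R) : dual_sc t =
  match t with
  | CaseI => bianchiIII_dual 0 0 0 0
  | CaseII => bianchiIII_dual 0 0 1 0
  | CaseIIIi b => bianchiIII_dual 0 (- b) 0 0
  | CaseIIIii => bianchiIII_dual 0 0 0 1
  | CaseIIIiii => bianchiIII_dual 1 0 0 0
  end.
Proof. by case: t => [| |b| |]; rewrite /bianchiIII_dual /= /Defs.zero3 ?oppr0 ?opprK. Qed.

Definition dual_case_of (ft : sc R) : dual_case R :=
  let al := ft i0 i1 i0 in let a := ft i0 i1 i1 in
  let be := ft i1 i2 i0 in let c := ft i1 i2 i1 in
  if a != 0 then CaseIIIi (- a)
  else if al != 0 then @CaseIIIiii R
  else if c != 0 then @CaseIIIii R
  else if be != 0 then @CaseII R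
  else @CaseI R.

Lemma dual_case_of_dual_sc t : dual_case_ok t -> dual_case_of (dual_sc t) = t.
Proof.
case: t => [| |b| |] ok_t; rewrite /dual_case_of /= ?eqxx ?oner_eq0 //=.
by move/eqP: ok_t; rewrite oppr_eq0 opprK => ->.
Qed.

Lemma dual_case_of_change (x y p q al a be c al' be' c' : R) :
  p + q != 0 -> p - q != 0 ->
  al' = (p + q) * al - (x + y) * a ->
  c' = (x - y) * a + (p - q) * c ->
  be' = (p + q) * ((x - y) * al + (p - q) * be) - (x + y) * c' ->
  dual_case_of (bianchiIII_dual al' a be' c') =
  dual_case_of (bianchiIII_dual al a be c).
Proof.
move=> pq_neq0 qp_neq0 -> -> ->; rewrite /dual_case_of /=.
case: (eqVneq a 0) => [->|//].
rewrite !(mulr0, subr0, add0r) !mulf_eq0 (negbTE pq_neq0) /=.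
case: (eqVneq al 0) => [->|//].
rewrite !(mulr0, add0r, subr0) (negbTE qp_neq0) /=.
case: (eqVneq c 0) => [->|//].
by rewrite !(mulr0, subr0) !mulf_eq0 (negbTE pq_neq0) (negbTE qp_neq0).
Qed.

Lemma bianchiIII_dual_normal_form (al a be c : R) : c * al = a * be ->
  exists t S, [/\ dual_case_ok t, S \in unitmx,
    basis_change S (bianchiIII R) (bianchiIII R) &
    basis_change S^T (dual_sc t) (bianchiIII_dual al a be c)].
Proof.
have normal t x y l g al' a' be' c' : dual_case_ok t -> l != 0 -> g != 0 ->
    basis_change (bianchiIII_aut x y ((l + g) / 2) ((l - g) / 2))^T (dual_sc t)
      (bianchiIII_dual al' a' be' c') ->
    exists t S, [/\ dual_case_ok t, S \in unitmx,
      basis_change S (bianchiIII R) (bianchiIII R) &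
      basis_change S^T (dual_sc t) (bianchiIII_dual al' a' be' c')].
  move=> ok_t l_neq0 g_neq0 chT.
  exists t, (bianchiIII_aut x y ((l + g) / 2) ((l - g) / 2)).
  split=> //; last exact: basis_change_bianchiIII_aut.
  apply: bianchiIII_aut_unit.
    by rewrite (_ : (l + g) / 2 + (l - g) / 2 = l) //; field.
  by rewrite (_ : (l + g) / 2 - (l - g) / 2 = g) //; field.
have [->|a_neq0] := eqVneq a 0; last first.
  move=> quad.
  apply: (normal (CaseIIIi (- a)) ((c - al) / a / 2) (- (al + c) / a / 2) 1 1);
    rewrite ?oner_eq0 //; first by apply/eqP; rewrite oppr_eq0.
  rewrite dual_scE opprK; apply: basis_change_bianchiIII_dual; try by field.
  by rewrite (_ : be = c * al / a); [field | rewrite quad; field].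
rewrite mul0r => quad.
have [->|al_neq0] := eqVneq al 0; last first.
  have -> : c = 0 by apply: (mulIf al_neq0); rewrite quad mul0r.
  apply: (normal (@CaseIIIiii R) (be / al / 2) (- (be / al) / 2) al 1); rewrite ?oner_eq0 //.
  by rewrite dual_scE; apply: basis_change_bianchiIII_dual; field.
have [->|c_neq0] := eqVneq c 0; last first.
  apply: (normal (@CaseIIIii R) (- be / c / 2) (- be / c / 2) 1 c); rewrite ?oner_eq0 //.
  by rewrite dual_scE; apply: basis_change_bianchiIII_dual; field.
have [->|be_neq0] := eqVneq be 0; last first.
  apply: (normal (@CaseII R) 0 0 be 1); rewrite ?oner_eq0 //.
  by rewrite dual_scE; apply: basis_change_bianchiIII_dual; field.
apply: (normal (@CaseI R) 0 0 1 1); rewrite ?oner_eq0 //.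
by rewrite dual_scE; apply: basis_change_bianchiIII_dual; field.
Qed.

Lemma dual_case_of_basis_change S ft t : dual_case_ok t -> S \in unitmx ->
  basis_change S (bianchiIII R) (bianchiIII R) ->
  basis_change S^T (dual_sc t) ft -> dual_case_of ft = t.
Proof.
move=> ok_t Su /(bianchiIII_autP Su)[x [y [p [q [SE pq_neq0 qp_neq0]]]]] chT.
subst S.
rewrite -(dual_case_of_dual_sc ok_t).
have [al [a [be [c dualE]]]] : exists al a be c, dual_sc t = bianchiIII_dual al a be c.
  by rewrite dual_scE; case: t {ok_t chT}; do 4 eexists.
rewrite dualE in chT *.
have ch' := @basis_change_bianchiIII_dual x y p q al a be c _ _ _ erefl erefl erefl.
have -> : ft = bianchiIII_dual ((p + q) * al - (x + y) * a) a
    ((p + q) * ((x - y) * al + (p - q) * be) - (x + y) * ((x - y) * a + (p - q) * c))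
    ((x - y) * a + (p - q) * c).
  apply: boolp.funext => i; apply: boolp.funext => j; apply: boolp.funext => k.
  by apply: (basis_change_uniq _ chT ch'); rewrite unitmx_tr.
exact: dual_case_of_change pq_neq0 qp_neq0 erefl erefl erefl.
Qed.

Lemma manin_isomorphic_basis_change (f' ft' f ft : sc R) (A : 'M[R]_3) : A \in unitmx ->
  basis_change A f' f -> basis_change A^T ft ft' -> manin_isomorphic f' ft' f ft.
Proof.
move=> Au ch chT; exists A; split=> //.
by split; [apply/transf_basis_change | apply/transft_basis_change].
Qed.

Lemma manin_isomorphic_triple (f' ft' f ft : sc R) :
  manin_triple f' ft' -> manin_isomorphic f' ft' f ft -> manin_triple f ft.
Proof.
move=> M [A [Au [fE ftE]]].
have -> : f = transf A f' by do 3 apply: boolp.funext => ?; apply: fE.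
have -> : ft = transft A ft' by do 3 apply: boolp.funext => ?; apply: ftE.
exact: manin_triple_transf.
Qed.

Lemma dual_case_exists (f' ft' : sc R) :
  manin_triple f' ft' -> lie_isomorphic f' (bianchiIII R) ->
  exists t, dual_case_ok t /\ manin_isomorphic f' ft' (bianchiIII R) (dual_sc t).
Proof.
move=> M [A0 [A0u f'E]].
have ch0 : basis_change A0 f' (bianchiIII R) by apply/transf_basis_change.
have chT0 : basis_change A0^T (transft A0 ft') ft' by apply/transft_basis_change.
have M0 : manin_triple (bianchiIII R) (transft A0 ft').
  by apply: manin_isomorphic_triple M _; exists A0.
have [al [a [be [c [ft0E quad]]]]] := manin_bianchiIII_dual M0.
have [t [S [ok_t Su chS chTS]]] := bianchiIII_dual_normal_form quad.
rewrite -ft0E in chTS.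
exists t; split=> //; apply: (@manin_isomorphic_basis_change _ _ _ _ (A0 *m S)).
- by rewrite unitmx_mul A0u.
- exact: basis_change_mul ch0 chS.
- by rewrite trmx_mul; apply: basis_change_mul chTS chT0.
Qed.

Lemma dual_case_uniq (f' ft' : sc R) (t1 t2 : dual_case R) :
  dual_case_ok t1 -> dual_case_ok t2 ->
  manin_isomorphic f' ft' (bianchiIII R) (dual_sc t1) ->
  manin_isomorphic f' ft' (bianchiIII R) (dual_sc t2) -> t1 = t2.
Proof.
move=> ok1 ok2 [A1 [A1u [f1E ft1E]]] [A2 [A2u [f2E ft2E]]].
have ch1 : basis_change A1 f' (bianchiIII R) by apply/transf_basis_change.
have ch2 : basis_change A2 f' (bianchiIII R) by apply/transf_basis_change.
have chT1 : basis_change A1^T (dual_sc t1) ft' by apply/transft_basis_change.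
have chT2 : basis_change A2^T (dual_sc t2) ft' by apply/transft_basis_change.
rewrite -(dual_case_of_dual_sc ok1).
apply: (@dual_case_of_basis_change (invmx A1 *m A2)) => //.
- by rewrite unitmx_mul unitmx_inv A1u.
- exact: basis_change_mul (basis_change_inv A1u ch1) ch2.
- rewrite trmx_mul trmx_inv; apply: basis_change_mul chT2 (basis_change_inv _ chT1).
  by rewrite unitmx_tr.
Qed.

End BianchiIII.

Theorem mainTheorem7 (R : realType) (f' ft' : sc R) :
  manin_triple f' ft' ->
  lie_isomorphic f' (bianchiIII R) ->
  exists! t : dual_case R,
    dual_case_ok t /\
    manin_triple (bianchiIII R) (dual_sc t) /\
    manin_isomorphic f' ft' (bianchiIII R) (dual_sc t).
Proof.
move=> M L; have [t [ok_t iso]] := dual_case_exists M L.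
exists t; split=> [|t' [ok_t' [_ iso']]]; last exact: dual_case_uniq ok_t ok_t' iso iso'.
by split=> //; split=> //; apply: manin_isomorphic_triple M iso.
Qed.
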